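(* Let $\delta>0$, $m>64\pi^2$, $\kappa>0$, $\mu^\star>0$, and let $\varepsilon\in(0,1)$, $\ell>0$, $\gamma>0$ satisfy: $\ell\ge\delta$; $-2^5\xi^2+(\mu^\star\varepsilon+6\ell)\xi-(\gamma+1)\ell\le0$ for all $\xi\in\mathbb{R}$; $2\gamma^2-3\ell\ge0$; $e^\varepsilon<\frac{1+2\kappa}{1+\kappa}$; $e^{(\gamma+1)\varepsilon}(1+3\varepsilon^3)<\frac{m}{64\pi^2}$; and $e^{(\ell-\delta)t}(1+(\varepsilon-\ell t)^3)\ge1+\varepsilon^3$ for all $t\in(0,\varepsilon/\ell)$. Put $\tau(t)=\varepsilon-\ell t$, $a(t)=2^5e^{(\gamma+1)\tau}$, $b(t)=8e^{\tau}$ and $$\underline U(s,t):=\frac{a(s^{3/2}+3\tau^3s)}{(s^{1/2}+\tau^3)^3},\qquad \underline W(s,t):=\frac{bs}{s^{1/2}+\tau^3},\qquad(s,t)\in[0,1]\times[0,\varepsilon/\ell).$$ Then for each $t\in[0,\varepsilon/\ell)$ the map $s\mapsto\underline U(s,t)$ on $[0,1]$ is nonnegative, increasing and concave; $\underline U(0,t)=0$ for all $t\in[0,\varepsilon/\ell)$; $\underline U(s,t)\to2^5$ as $t\uparrow\varepsilon/\ell$ for every $s\in(0,1]$; $$\sup_{t\in(0,\varepsilon/\ell)}\underline U(1,t)<\frac{m}{2\pi^2};$$ and $\mathcal P^{\mu^\star}(\underline U,\underline W)\le0$ for all $(s,t)\in(0,1)\times(0,\varepsilon/\ell)$.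
   Context: For functions $\phi,\psi$ and the constant $\mu^\star>0$, the operator is $\mathcal P^{\mu^\star}(\phi,\psi):=\phi_t-16s^{3/2}\phi_{ss}-4\phi_s\big(\psi-\frac{\mu^\star s}{4}\big)$. *)

From Stdlib Require Import Reals Lra.
From Coquelicot Require Import Coquelicot.
Open Scope R_scope.

Definition s12 (s : R) : R := sqrt s.
Definition s32 (s : R) : R := (sqrt s) ^ 3.

Definition tau (eps l t : R) : R := eps - l * t.
Definition acoef (eps l gamma t : R) : R := 2 ^ 5 * exp ((gamma + 1) * tau eps l t).
Definition bcoef (eps l t : R) : R := 8 * exp (tau eps l t).

Definition Ulow (eps l gamma : R) (s t : R) : R :=
  acoef eps l gamma t * (s32 s + 3 * (tau eps l t) ^ 3 * s)
    / (s12 s + (tau eps l t) ^ 3) ^ 3.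

Definition Wlow (eps l : R) (s t : R) : R :=
  bcoef eps l t * s / (s12 s + (tau eps l t) ^ 3).

Definition Pop (mu : R) (phi psi : R -> R -> R) (s t : R) : R :=
  Derive (fun t' => phi s t') t
  - 16 * s32 s * Derive (fun s' => Derive (fun s'' => phi s'' t) s') s
  - 4 * Derive (fun s' => phi s' t) s * (psi s t - mu * s / 4).

Definition concave_on (a b : R) (f : R -> R) : Prop :=
  forall x y lam, a <= x <= b -> a <= y <= b -> 0 <= lam <= 1 ->
    lam * f x + (1 - lam) * f y <= f (lam * x + (1 - lam) * y).

From Stdlib Require Import Reals Lra.
From Coquelicot Require Import Coquelicot.
Open Scope R_scope.

(* With [x = sqrt s] and [c = tau^3], the profile [U = a (x^3 + 3 c x^2) / (x + c)^3]
   has [U_s = 3 a c^2 / (x + c)^4], which is positive and decreasing in [s]; this gives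
   monotonicity and concavity.  At [tau = 0] the profile is identically [2^5].  A direct
   computation factors [P(U, W)] as [a s / (x + c)^5] times a polynomial bracket, and the
   bracket is nonpositive by the quadratic hypothesis taken at [xi = tau^2 / (x + c)],
   together with [exp tau >= 1 + tau] and [tau <= eps]. *)

Lemma continuous_Rmult (f g : R -> R) x :
  continuous f x -> continuous g x -> continuous (fun y => f y * g y) x.
Proof. apply (continuous_mult (K := R_AbsRing)). Qed.

Lemma continuous_Rplus (f g : R -> R) x :
  continuous f x -> continuous g x -> continuous (fun y => f y + g y) x.
Proof. apply (continuous_plus (V := R_NormedModule)). Qed.

Lemma continuous_Rpow (f : R -> R) n x :
  continuous f x -> continuous (fun y => f y ^ n) x.
Proof. intros Hf; induction n; [apply continuous_const | now apply continuous_Rmult]. Qed.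

Lemma concave_combination_le (a b : R) (f df : R -> R) x y lam :
  (forall u, a < u < b -> is_derive f u (df u)) ->
  (forall u, a <= u <= b -> continuity_pt f u) ->
  (forall u v, a <= u <= v -> v <= b -> df v <= df u) ->
  a <= x -> x < y -> y <= b -> 0 < lam < 1 ->
  lam * f x + (1 - lam) * f y <= f (lam * x + (1 - lam) * y).
Proof.
intros Hd Hc Hdec Hax Hxy Hyb Hlam.
set (z := lam * x + (1 - lam) * y).
assert (Hxz : x < z) by (unfold z; nra).
assert (Hzy : z < y) by (unfold z; nra).
destruct (MVT_gen f x z df) as [c1 [Hc1 E1]];
  rewrite ?Rmin_left, ?Rmax_right in * by lra;
  [intros u Hu; apply Hd; lra | intros u Hu; apply Hc; lra |].
destruct (MVT_gen f z y df) as [c2 [Hc2 E2]];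
  rewrite ?Rmin_left, ?Rmax_right in * by lra;
  [intros u Hu; apply Hd; lra | intros u Hu; apply Hc; lra |].
assert (Hslopes : df c2 <= df c1) by (apply Hdec; lra).
assert (Ez1 : z - x = (1 - lam) * (y - x)) by (unfold z; ring).
assert (Ez2 : y - z = lam * (y - x)) by (unfold z; ring).
rewrite Ez1 in E1; rewrite Ez2 in E2.
assert (0 <= lam * (1 - lam) * (y - x) * (df c1 - df c2))
  by (repeat apply Rmult_le_pos; lra).
clearbody z; nra.
Qed.

Lemma concave_on_of_derive_nonincreasing (a b : R) (f df : R -> R) :
  (forall u, a < u < b -> is_derive f u (df u)) ->
  (forall u, a <= u <= b -> continuity_pt f u) ->
  (forall u v, a <= u <= v -> v <= b -> df v <= df u) ->
  concave_on a b f.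
Proof.
intros Hd Hc Hdec x y lam Hx Hy Hlam.
destruct (Req_dec lam 0) as [->|H0].
{ replace (0 * x + (1 - 0) * y) with y by ring; lra. }
destruct (Req_dec lam 1) as [->|H1].
{ replace (1 * x + (1 - 1) * y) with x by ring; lra. }
destruct (Rtotal_order x y) as [Hxy|[<-|Hyx]].
- apply (concave_combination_le a b f df); auto; lra.
- replace (lam * x + (1 - lam) * x) with x by ring; lra.
- replace (lam * x + (1 - lam) * y) with ((1 - lam) * y + (1 - (1 - lam)) * x) by ring.
  enough ((1 - lam) * f y + (1 - (1 - lam)) * f x
            <= f ((1 - lam) * y + (1 - (1 - lam)) * x)) by lra.
  apply (concave_combination_le a b f df); auto; lra.
Qed.

Definition profile (a c s : R) : R := a * (sqrt s ^ 3 + 3 * c * s) / (sqrt s + c) ^ 3.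

Definition dprofile (a c s : R) : R := 3 * a * c ^ 2 / (sqrt s + c) ^ 4.

Lemma Ulow_profile eps l gamma s t :
  Ulow eps l gamma s t = profile (acoef eps l gamma t) (tau eps l t ^ 3) s.
Proof. reflexivity. Qed.

Lemma profile_0 a c : profile a c 0 = 0.
Proof. unfold profile; rewrite sqrt_0; unfold Rdiv; ring. Qed.

Lemma profile_pos a c s : 0 < a -> 0 <= c -> 0 < s -> 0 < profile a c s.
Proof.
intros Ha Hc Hs; assert (0 < sqrt s) by (apply sqrt_lt_R0; lra).
apply Rdiv_lt_0_compat; [apply Rmult_lt_0_compat|apply pow_lt]; try nra.
assert (0 < sqrt s ^ 3) by (apply pow_lt; lra); nra.
Qed.

Lemma profile_nonneg a c s : 0 < a -> 0 <= c -> 0 <= s -> 0 <= profile a c s.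
Proof.
intros Ha Hc [Hs|<-]; [now apply Rlt_le, profile_pos | now rewrite profile_0; right].
Qed.

Lemma profile_1_le a c : 0 <= a -> 0 <= c -> profile a c 1 <= a * (1 + 3 * c).
Proof.
intros Ha Hc; unfold profile; rewrite sqrt_1.
assert (1 <= (1 + c) ^ 3) by (rewrite <- (pow1 3) at 1; apply pow_incr; lra).
apply Rle_div_l; [lra|].
replace (1 ^ 3 + 3 * c * 1) with (1 + 3 * c) by ring.
assert (0 <= a * (1 + 3 * c)) by nra; nra.
Qed.

Lemma continuous_profile a c s : 0 < c -> continuity_pt (profile a c) s.
Proof.
intros Hc; apply continuity_pt_filterlim.
change (continuous (fun s => a * (sqrt s ^ 3 + 3 * c * s) * / (sqrt s + c) ^ 3) s).
assert (0 <= sqrt s) by apply sqrt_pos.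
assert (Hsqrt := continuous_sqrt s).
repeat first [ apply continuous_Rmult | apply continuous_Rplus | apply continuous_Rpow
             | apply continuous_const | apply continuous_id | exact Hsqrt
             | apply continuous_Rinv_comp; [|apply pow_nonzero; lra] ].
Qed.

Lemma is_derive_profile a c s :
  0 <= c -> 0 < s -> is_derive (profile a c) s (dprofile a c s).
Proof.
intros Hc Hs; assert (0 < sqrt s) by (apply sqrt_lt_R0; lra).
unfold profile, dprofile; auto_derive.
- repeat split; try lra; repeat apply Rmult_integral_contrapositive_currified; lra.
- assert (Hss : s = sqrt s * sqrt s) by (rewrite sqrt_sqrt; lra).
  set (x := sqrt s) in *; clearbody x; subst s; field; lra.
Qed.

Lemma is_derive_dprofile a c s : 0 <= c -> 0 < s ->
  is_derive (dprofile a c) s (- 6 * a * c ^ 2 / (sqrt s * (sqrt s + c) ^ 5)).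
Proof.
intros Hc Hs; assert (0 < sqrt s) by (apply sqrt_lt_R0; lra).
unfold dprofile; auto_derive.
- repeat split; try lra; repeat apply Rmult_integral_contrapositive_currified; lra.
- field; lra.
Qed.

Lemma dprofile_pos a c s : 0 < a -> 0 < c -> 0 < dprofile a c s.
Proof.
intros Ha Hc; assert (0 <= sqrt s) by apply sqrt_pos.
apply Rdiv_lt_0_compat; [|apply pow_lt; lra].
assert (0 < c ^ 2) by (apply pow_lt; lra); nra.
Qed.

Lemma dprofile_nonincreasing a c u v : 0 <= a -> 0 < c -> 0 <= u <= v ->
  dprofile a c v <= dprofile a c u.
Proof.
intros Ha Hc Huv; unfold dprofile, Rdiv.
assert (0 <= sqrt u) by apply sqrt_pos.
assert (sqrt u <= sqrt v) by (apply sqrt_le_1_alt; lra).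
apply Rmult_le_compat_l; [assert (0 <= c ^ 2) by (apply pow_le; lra); nra|].
apply Rinv_le_contravar; [apply pow_lt; lra | apply pow_incr; lra].
Qed.

Lemma profile_increasing a c s1 s2 : 0 < a -> 0 < c -> 0 <= s1 -> s1 < s2 ->
  profile a c s1 < profile a c s2.
Proof.
intros Ha Hc [Hs1|<-] H12.
- apply (incr_function (profile a c) (Finite 0) p_infty (dprofile a c)); simpl; auto.
  + intros u Hu _; apply is_derive_profile; lra.
  + intros u _ _; now apply dprofile_pos.
- rewrite profile_0; apply profile_pos; lra.
Qed.

Lemma profile_concave a c b : 0 <= a -> 0 < c -> concave_on 0 b (profile a c).
Proof.
intros Ha Hc; apply (concave_on_of_derive_nonincreasing _ _ _ (dprofile a c)).
- intros u Hu; apply is_derive_profile; lra.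
- intros u _; now apply continuous_profile.
- intros u v Huv Hv; apply dprofile_nonincreasing; auto; lra.
Qed.

Lemma tau_pos eps l t : 0 < l -> 0 <= t < eps / l -> 0 < tau eps l t <= eps.
Proof.
intros Hl [Ht0 Ht]; unfold tau.
apply (Rmult_lt_compat_l l) in Ht; [|lra].
replace (l * (eps / l)) with eps in Ht by (field; lra); nra.
Qed.

Lemma acoef_pos eps l gamma t : 0 < acoef eps l gamma t.
Proof. unfold acoef; pose proof (exp_pos ((gamma + 1) * tau eps l t)); lra. Qed.

Lemma is_derive_Ulow_t eps l gamma s t : 0 < s -> 0 <= tau eps l t ->
  is_derive (fun t : R => Ulow eps l gamma s t) t
    (- (gamma + 1) * l * Ulow eps l gamma s t
     + 18 * l * tau eps l t ^ 5 * acoef eps l gamma t * s / (sqrt s + tau eps l t ^ 3) ^ 4).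
Proof.
intros Hs Htau; assert (0 < sqrt s) by (apply sqrt_lt_R0; lra).
assert (0 <= tau eps l t ^ 3) by (apply pow_le; lra).
unfold Ulow, acoef, tau, s32, s12 in *; auto_derive.
- repeat apply Rmult_integral_contrapositive_currified; simpl in *; lra.
- replace (eps + - (l * t)) with (eps - l * t) by ring.
  set (E := exp ((gamma + 1) * (eps - l * t))); clearbody E.
  set (tau := eps - l * t) in *; clearbody tau.
  assert (Hss : s = sqrt s * sqrt s) by (rewrite sqrt_sqrt; lra).
  set (x := sqrt s) in *; clearbody x; subst s; field; simpl in *; lra.
Qed.

Lemma tau_at_final_time eps l : 0 < l -> tau eps l (eps / l) = 0.
Proof. intros Hl; unfold tau; field; lra. Qed.

Lemma Ulow_at_final_time eps l gamma s : 0 < l -> 0 < s ->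
  Ulow eps l gamma s (eps / l) = 2 ^ 5.
Proof.
intros Hl Hs; assert (0 < sqrt s) by (apply sqrt_lt_R0; lra).
unfold Ulow, acoef, s32, s12; rewrite tau_at_final_time, Rmult_0_r, exp_0 by lra.
field; lra.
Qed.

Lemma Ulow_cvg_final_time eps l gamma s : 0 < l -> 0 < s ->
  filterlim (fun t => Ulow eps l gamma s t) (at_left (eps / l)) (locally (2 ^ 5)).
Proof.
intros Hl Hs; rewrite <- (Ulow_at_final_time eps l gamma s) by lra.
eapply filterlim_filter_le_1; [apply filter_le_within|].
apply (ex_derive_continuous (fun t => Ulow eps l gamma s t)); eexists; apply is_derive_Ulow_t; auto.
rewrite tau_at_final_time by lra; lra.
Qed.

Lemma Ulow_1_le eps l gamma t : 0 < l -> 0 < gamma -> 0 <= t < eps / l ->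
  Ulow eps l gamma 1 t <= 2 ^ 5 * exp ((gamma + 1) * eps) * (1 + 3 * eps ^ 3).
Proof.
intros Hl Hg Ht; destruct (tau_pos eps l t Hl Ht) as [Htau Htau_eps].
rewrite Ulow_profile.
eapply Rle_trans; [apply profile_1_le; [apply Rlt_le, acoef_pos | apply pow_le; lra]|].
unfold acoef; rewrite Rmult_assoc, (Rmult_assoc (2 ^ 5)).
apply Rmult_le_compat_l; [lra|].
apply Rmult_le_compat; [apply Rlt_le, exp_pos | | |].
- assert (0 <= tau eps l t ^ 3) by (apply pow_le; lra); lra.
- assert (Hexp : (gamma + 1) * tau eps l t <= (gamma + 1) * eps) by nra.
  destruct Hexp as [Hlt|Heq]; [left; now apply exp_increasing | right; now rewrite Heq].
- assert (tau eps l t ^ 3 <= eps ^ 3) by (apply pow_incr; lra); lra.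
Qed.

Lemma Lub_Rbar_lt_of_bound (E : R -> Prop) (B M : R) :
  (forall x, E x -> x <= B) -> B < M -> Rbar_lt (Lub_Rbar E) (Finite M).
Proof.
intros HB HBM.
assert (Hle : Rbar_le (Lub_Rbar E) (Finite B)) by (apply (proj2 (Lub_Rbar_correct E)); exact HB).
destruct (Lub_Rbar E); simpl in *; lra.
Qed.

Definition Pop_bracket (mu l gamma E tau x : R) : R :=
  - (gamma + 1) * l * (x + 3 * tau ^ 3) * (x + tau ^ 3) ^ 2
  + 18 * l * tau ^ 5 * (x + tau ^ 3)
  + 96 * (1 - E) * tau ^ 6
  + 3 * mu * tau ^ 6 * (x + tau ^ 3).

Lemma Pop_bracket_nonpos mu eps l gamma E tau x :
  0 < tau <= eps -> 0 <= x -> 0 <= mu -> 0 <= l -> 0 <= gamma -> 1 + tau <= E ->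
  (forall xi : R, - 2 ^ 5 * xi ^ 2 + (mu * eps + 6 * l) * xi - (gamma + 1) * l <= 0) ->
  Pop_bracket mu l gamma E tau x <= 0.
Proof.
intros Htau Hx Hmu Hl Hg HE Hquad.
set (y := x + tau ^ 3).
assert (Hy : 0 < y) by (unfold y; pose proof (pow_lt tau 3 (proj1 Htau)); lra).
specialize (Hquad (tau ^ 2 / y)).
assert (Hsplit : Pop_bracket mu l gamma E tau x =
    3 * tau ^ 3 * y ^ 2
      * (- 2 ^ 5 * (tau ^ 2 / y) ^ 2 + (mu * eps + 6 * l) * (tau ^ 2 / y) - (gamma + 1) * l)
    + 96 * tau ^ 6 * (1 + tau - E)
    + 3 * mu * tau ^ 5 * y * (tau - eps)
    - (gamma + 1) * l * y ^ 2 * x)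
  by (unfold Pop_bracket, y in *; field; lra).
rewrite Hsplit.
assert (0 < tau ^ 3) by (apply pow_lt; lra).
assert (0 <= 3 * tau ^ 3 * y ^ 2) by (pose proof (pow_lt y 2 Hy); nra).
assert (0 <= tau ^ 6) by (apply pow_le; lra).
assert (0 <= 3 * mu * tau ^ 5 * y) by (pose proof (pow_le tau 5); repeat apply Rmult_le_pos; lra).
assert (0 <= (gamma + 1) * l * y ^ 2 * x) by (pose proof (pow_le y 2); repeat apply Rmult_le_pos; lra).
nra.
Qed.

Lemma Pop_Ulow_factor mu eps l gamma s t : 0 < s -> 0 <= tau eps l t ->
  Pop mu (Ulow eps l gamma) (Wlow eps l) s t =
  acoef eps l gamma t * s / (sqrt s + tau eps l t ^ 3) ^ 5
  * Pop_bracket mu l gamma (exp (tau eps l t)) (tau eps l t) (sqrt s).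
Proof.
intros Hs Htau.
assert (Dt := is_derive_unique _ _ _ (is_derive_Ulow_t eps l gamma s t Hs Htau)).
set (a := acoef eps l gamma t) in *; set (c := tau eps l t ^ 3) in *.
assert (Hc : 0 <= c) by (apply pow_le; lra).
assert (Ds : forall s', 0 < s' -> Derive (fun s'' => Ulow eps l gamma s'' t) s' = dprofile a c s')
  by (intros s' Hs'; apply is_derive_unique, is_derive_profile; lra).
assert (Dss : Derive (fun s' => Derive (fun s'' => Ulow eps l gamma s'' t) s') s
              = - 6 * a * c ^ 2 / (sqrt s * (sqrt s + c) ^ 5)).
{ rewrite (Derive_ext_loc _ (dprofile a c)).
  - apply is_derive_unique, is_derive_dprofile; lra.
  - apply (locally_interval _ s 0 p_infty); simpl; auto. }
unfold Pop; rewrite Dt, Dss, Ds by lra.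
unfold Ulow, Wlow, bcoef, dprofile, Pop_bracket, s32, s12; fold a c.
assert (0 < sqrt s) by (apply sqrt_lt_R0; lra).
assert (Hss : s = sqrt s * sqrt s) by (rewrite sqrt_sqrt; lra).
unfold c in *; set (x := sqrt s) in *; clearbody x; subst s.
field; lra.
Qed.

Lemma Pop_Ulow_nonpos mu eps l gamma s t :
  0 < mu -> 0 < l -> 0 < gamma -> 0 < s -> 0 < t < eps / l ->
  (forall xi : R, - 2 ^ 5 * xi ^ 2 + (mu * eps + 6 * l) * xi - (gamma + 1) * l <= 0) ->
  Pop mu (Ulow eps l gamma) (Wlow eps l) s t <= 0.
Proof.
intros Hmu Hl Hg Hs Ht Hquad.
destruct (tau_pos eps l t) as [Htau Htau_eps]; [lra | lra |].
rewrite Pop_Ulow_factor by lra.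
assert (0 <= acoef eps l gamma t * s / (sqrt s + tau eps l t ^ 3) ^ 5).
{ pose proof (acoef_pos eps l gamma t); pose proof (sqrt_pos s).
  assert (0 < tau eps l t ^ 3) by (apply pow_lt; lra).
  apply Rlt_le, Rdiv_lt_0_compat; [nra | apply pow_lt; lra]. }
assert (Pop_bracket mu l gamma (exp (tau eps l t)) (tau eps l t) (sqrt s) <= 0).
{ apply (Pop_bracket_nonpos mu eps); try lra; auto.
  - apply sqrt_pos.
  - apply exp_ineq1_le. }
nra.
Qed.

Theorem lemma3p7 (delta m kappa mu eps l gamma : R)
  (Hdelta : 0 < delta) (Hm : m > 64 * PI ^ 2) (Hkappa : 0 < kappa) (Hmu : 0 < mu)
  (Heps : 0 < eps < 1) (Hl : 0 < l) (Hgamma : 0 < gamma)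
  (H1 : l >= delta)
  (H2 : forall xi : R, - 2 ^ 5 * xi ^ 2 + (mu * eps + 6 * l) * xi - (gamma + 1) * l <= 0)
  (H3 : 2 * gamma ^ 2 - 3 * l >= 0)
  (H4 : exp eps < (1 + 2 * kappa) / (1 + kappa))
  (H5 : exp ((gamma + 1) * eps) * (1 + 3 * eps ^ 3) < m / (64 * PI ^ 2))
  (H6 : forall t : R, 0 < t < eps / l ->
        exp ((l - delta) * t) * (1 + (eps - l * t) ^ 3) >= 1 + eps ^ 3) :
  (forall t : R, 0 <= t < eps / l ->
     (forall s : R, 0 <= s <= 1 -> 0 <= Ulow eps l gamma s t)
     /\ (forall s1 s2 : R, 0 <= s1 -> s1 < s2 -> s2 <= 1 ->
           Ulow eps l gamma s1 t < Ulow eps l gamma s2 t)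
     /\ concave_on 0 1 (fun s => Ulow eps l gamma s t))
  /\ (forall t : R, 0 <= t < eps / l -> Ulow eps l gamma 0 t = 0)
  /\ (forall s : R, 0 < s <= 1 ->
        filterlim (fun t => Ulow eps l gamma s t) (at_left (eps / l)) (locally (2 ^ 5)))
  /\ Rbar_lt
       (Lub_Rbar (fun x => exists t, 0 < t < eps / l /\ x = Ulow eps l gamma 1 t))
       (Finite (m / (2 * PI ^ 2)))
  /\ (forall s t : R, 0 < s < 1 -> 0 < t < eps / l ->
        Pop mu (Ulow eps l gamma) (Wlow eps l) s t <= 0).
Proof.
split; [|split; [|split; [|split]]].
- intros t Ht.
  assert (Hc : 0 < tau eps l t ^ 3) by (apply pow_lt, (tau_pos eps l t); lra).
  pose proof (acoef_pos eps l gamma t) as Ha.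
  split; [|split].
  + intros s Hs; apply profile_nonneg; lra.
  + intros s1 s2 Hs1 H12 _; apply profile_increasing; lra.
  + apply profile_concave; lra.
- intros t _; apply profile_0.
- intros s Hs; apply Ulow_cvg_final_time; lra.
- apply (Lub_Rbar_lt_of_bound _ (2 ^ 5 * exp ((gamma + 1) * eps) * (1 + 3 * eps ^ 3))).
  + intros x [t [Ht ->]]; apply Ulow_1_le; lra.
  + pose proof PI_RGT_0.
    replace (m / (2 * PI ^ 2)) with (2 ^ 5 * (m / (64 * PI ^ 2))) by (field; lra).
    rewrite Rmult_assoc; apply Rmult_lt_compat_l; [lra | exact H5].
- intros s t Hs Ht; apply Pop_Ulow_nonpos; auto; lra.
Qed.
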